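(* Let $\mathfrak{C}\in\{c,B\}$. (a) There is a family of size $2^{\aleph_0}$ of pairs $(X,A)$, $X$ Polish and $A$ a $\Sigma^0_2$ digraph on $X$ of uncountable Borel chromatic number, which is a $\preceq^{inj}_{\mathfrak{C}}$-antichain (pairwise incomparable). (b) There is a sequence $(X_n,A_n)_{n\in\omega}$ of such pairs ($\Sigma^0_2$ digraphs on Polish spaces of uncountable Borel chromatic number) with $(X_n,A_n)\preceq^{inj}_{\mathfrak{C}}(X_{n+1},A_{n+1})$ and $(X_{n+1},A_{n+1})\not\preceq^{inj}_{\mathfrak{C}}(X_n,A_n)$ for every $n$.
   Context: A digraph on $X$ is a relation $A\subseteq X^2$ disjoint from the diagonal. For relations $A$ on $X$, $B$ on $Y$ (Polish), $(X,A)\preceq^{inj}_c(Y,B)$ (resp. $\preceq^{inj}_B$) means there is an injective continuous (resp. Borel) $h:X\to Y$ with $A\subseteq(h\times h)^{-1}(B)$. The Borel chromatic number of a digraph $A$ on Polish $X$ is the least cardinality of a Polish $Y$ admitting a Borel $c:X\to Y$ with $c(x)\neq c(x')$ for $(x,x')\in A$. *)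

From Stdlib Require Import Reals.
Open Scope R_scope.

Record Polish := {
  pcarrier :> Type;
  pdist : pcarrier -> pcarrier -> R;
  pdist_nonneg : forall x y, 0 <= pdist x y;
  pdist_eq0 : forall x y, pdist x y = 0 <-> x = y;
  pdist_sym : forall x y, pdist x y = pdist y x;
  pdist_tri : forall x y z, pdist x z <= pdist x y + pdist y z;
  pcomplete : forall u : nat -> pcarrier,
      (forall eps, 0 < eps -> exists N, forall n m, (n >= N)%nat -> (m >= N)%nat ->
          pdist (u n) (u m) < eps) ->
      exists l, forall eps, 0 < eps -> exists N, forall n, (n >= N)%nat -> pdist (u n) l < eps;
  (* countable dense subset (possibly empty, via option) *)
  pseparable : exists D : nat -> option pcarrier,
      forall x eps, 0 < eps -> exists n y, D n = Some y /\ pdist x y < eps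
}.

Definition is_open {X : Polish} (U : X -> Prop) : Prop :=
  forall x, U x -> exists eps, 0 < eps /\ forall y, pdist X x y < eps -> U y.

Definition is_open2 {X : Polish} (U : X -> X -> Prop) : Prop :=
  forall x1 x2, U x1 x2 -> exists eps, 0 < eps /\
    forall y1 y2, pdist X x1 y1 < eps -> pdist X x2 y2 < eps -> U y1 y2.

Definition is_closed2 {X : Polish} (F : X -> X -> Prop) : Prop :=
  is_open2 (fun a b => ~ F a b).

Definition Sigma02_2 {X : Polish} (A : X -> X -> Prop) : Prop :=
  exists F : nat -> X -> X -> Prop, (forall n, is_closed2 (F n)) /\
    forall a b, A a b <-> exists n, F n a b.

Inductive borel (X : Polish) : (X -> Prop) -> Prop :=
  | borel_open : forall U, is_open U -> borel X U
  | borel_compl : forall U, borel X U -> borel X (fun x => ~ U x)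
  | borel_cunion : forall U : nat -> X -> Prop, (forall n, borel X (U n)) ->
      borel X (fun x => exists n, U n x)
  | borel_ext : forall U V, borel X U -> (forall x, U x <-> V x) -> borel X V.

Definition continuous {X Y : Polish} (f : X -> Y) : Prop :=
  forall U : Y -> Prop, is_open U -> is_open (fun x => U (f x)).

Definition borel_fun {X Y : Polish} (f : X -> Y) : Prop :=
  forall U : Y -> Prop, is_open U -> borel X (fun x => U (f x)).

Definition injective {X Y : Type} (f : X -> Y) : Prop :=
  forall x y, f x = f y -> x = y.

Definition countable_type (Y : Type) : Prop := exists f : Y -> nat, injective f.

Record PRel := { prX : Polish; prA : prX -> prX -> Prop }.

Definition is_digraph (P : PRel) : Prop := forall x, ~ prA P x x.

Definition uncountable_borel_chromatic (P : PRel) : Prop :=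
  forall (Y : Polish) (c : prX P -> Y), countable_type Y -> borel_fun c ->
    exists x x', prA P x x' /\ c x = c x'.

Inductive redmode := RedCont | RedBorel.

Definition inj_reduces (m : redmode) (P Q : PRel) : Prop :=
  exists h : prX P -> prX Q, injective h /\
    (match m with RedCont => continuous h | RedBorel => borel_fun h end) /\
    forall x x', prA P x x' -> prA Q (h x) (h x').

Definition good (P : PRel) : Prop :=
  is_digraph P /\ Sigma02_2 (prA P) /\ uncountable_borel_chromatic P.

(* All examples live on the real line R.  For a set P of natural numbers,
   [cycle_graph P] is the digraph whose edges are
   - the strict order x < y on [0, +oo), and
   - for every k in P with k >= 2, a directed k-cycle on fixed negative points.
   The order part is a Sigma^0_2 acyclic digraph on which every proper colouring
   is injective on [0, +oo), which has the cardinality of Cantor space; hence the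
   Borel (indeed, every) chromatic number is uncountable.  The cycle part is a
   set of isolated edges, so the whole digraph is still Sigma^0_2.

   The invariant separating these digraphs is the set of cycle lengths: an
   injective homomorphism cannot send a k-cycle into the acyclic order part, so
   it maps it onto a cycle of the target, which must then have length k.
   Conversely P ⊆ T makes the identity a (continuous) injective homomorphism.
   Coding an infinite binary sequence i by the set {2k+3+i(k)} then gives a
   continuum-size antichain, and the sets [2, n+2] give a strictly increasing
   chain. *)

From Stdlib Require Import Reals Lra Lia Classical ClassicalEpsilon FunctionalExtensionality.
From Stdlib Require Cantor.
Open Scope R_scope.

(* The real line as a Polish space: the numbers (p - q) / (a + 1) are dense. *)

Lemma IZR_as_difference (z : Z) : exists p q : nat, IZR z = INR p - INR q.
Proof.
  exists (Z.to_nat z), (Z.to_nat (- z)).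
  rewrite !INR_IZR_INZ, <- minus_IZR. f_equal. lia.
Qed.

Lemma rational_approx (x eps : R) : 0 < eps ->
  exists a p q : nat, Rabs (x - (INR p - INR q) / INR (S a)) < eps.
Proof.
  intros Heps. destruct (archimed_cor1 eps Heps) as [N [HN HN0]].
  destruct N as [|a]; [lia|].
  set (r := x * INR (S a)).
  destruct (archimed r) as [Hup1 Hup2].
  destruct (IZR_as_difference (up r)) as [p [q Hpq]].
  exists a, p, q. rewrite <- Hpq.
  assert (Hpos : 0 < INR (S a)) by (apply lt_0_INR; lia).
  replace (x - IZR (up r) / INR (S a)) with ((r - IZR (up r)) / INR (S a))
    by (unfold r; field; lra).
  unfold Rdiv. rewrite Rabs_mult, Rabs_inv, (Rabs_right (INR (S a))) by lra.
  apply Rle_lt_trans with (1 * / INR (S a)); [|lra].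
  apply Rmult_le_compat_r; [left; apply Rinv_0_lt_compat; lra|].
  apply Rabs_le. lra.
Qed.

Definition rational_enum (n : nat) : option R :=
  let (a, r) := Cantor.of_nat n in let (p, q) := Cantor.of_nat r in
  Some ((INR p - INR q) / INR (S a)).

Definition R_polish : Polish.
Proof.
  refine {| pcarrier := R; pdist := fun x y => Rabs (x - y) |}.
  - intros; apply Rabs_pos.
  - intros x y; split; intro H.
    + destruct (Req_dec (x - y) 0) as [E|E]; [lra|].
      apply Rabs_no_R0 in E; contradiction.
    + subst; rewrite Rminus_diag, Rabs_R0; reflexivity.
  - intros; apply Rabs_minus_sym.
  - intros x y z. replace (x - z) with ((x - y) + (y - z)) by ring. apply Rabs_triang.
  - intros u Hu. destruct (R_complete u) as [l Hl].
    + intros eps Heps. apply Hu; lra.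
    + exists l. intros eps Heps. exact (Hl eps Heps).
  - exists rational_enum. intros x eps Heps.
    destruct (rational_approx x eps Heps) as [a [p [q H]]].
    exists (Cantor.to_nat (a, Cantor.to_nat (p, q))), ((INR p - INR q) / INR (S a)).
    unfold rational_enum. rewrite !Cantor.cancel_of_to. split; [reflexivity|exact H].
Defined.

Definition cycle_point (k j : nat) : R := - INR (k * k + j) - 1.

Lemma cycle_point_neg k j : cycle_point k j < 0.
Proof. unfold cycle_point. pose proof (pos_INR (k * k + j)). lra. Qed.

Lemma cycle_point_inj k j k' j' : (j < k)%nat -> (j' < k')%nat ->
  cycle_point k j = cycle_point k' j' -> k = k' /\ j = j'.
Proof.
  intros Hj Hj' E. unfold cycle_point in E.
  assert (Hcode : (k * k + j = k' * k' + j')%nat) by (apply INR_eq; lra).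
  destruct (Nat.lt_trichotomy k k') as [L|[L|L]]; [exfalso| subst; lia |exfalso].
  - assert (S k * S k <= k' * k')%nat by (apply Nat.mul_le_mono; lia). nia.
  - assert (S k' * S k' <= k * k)%nat by (apply Nat.mul_le_mono; lia). nia.
Qed.

Definition order_edge (x y : R) : Prop := 0 <= x /\ x < y.

Definition cycle_edge (P : nat -> Prop) (x y : R) : Prop :=
  exists k j, P k /\ (2 <= k)%nat /\ (j < k)%nat /\
    x = cycle_point k j /\ y = cycle_point k (S j mod k).

Definition cycle_edges (P : nat -> Prop) (x y : R) : Prop := order_edge x y \/ cycle_edge P x y.

Definition cycle_graph (P : nat -> Prop) : PRel := {| prX := R_polish; prA := cycle_edges P |}.

Lemma cycle_graph_digraph (P : nat -> Prop) : is_digraph (cycle_graph P).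
Proof.
  intros x [[_ L]|[k [j [_ [Hk [Hj [E1 E2]]]]]]]; [lra|].
  rewrite E1 in E2. apply cycle_point_inj in E2; [|lia|apply Nat.mod_upper_bound; lia].
  destruct E2 as [_ E]. destruct (Nat.eq_dec (S j) k) as [Ek|Ek].
  - rewrite Ek, Nat.Div0.mod_same in E. lia.
  - rewrite Nat.mod_small in E by lia. lia.
Qed.

(* Sigma^0_2: the order part is the union of the closed sets
   {0 <= x, x + 1/(n+1) <= y}, and the cycle part is a countable set of points. *)

Lemma closed2_or (F G : R -> R -> Prop) :
  @is_closed2 R_polish F -> @is_closed2 R_polish G ->
  @is_closed2 R_polish (fun a b => F a b \/ G a b).
Proof.
  intros HF HG x1 x2 N.
  destruct (HF x1 x2 ltac:(tauto)) as [e1 [He1 H1]].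
  destruct (HG x1 x2 ltac:(tauto)) as [e2 [He2 H2]].
  exists (Rmin e1 e2). split; [apply Rmin_glb_lt; auto|].
  pose proof (Rmin_l e1 e2). pose proof (Rmin_r e1 e2).
  intros y1 y2 D1 D2 [C|C]; [apply (H1 y1 y2)|apply (H2 y1 y2)]; auto; lra.
Qed.

Lemma closed2_subsingleton (F : R -> R -> Prop) :
  (forall a b a' b', F a b -> F a' b' -> a = a' /\ b = b') -> @is_closed2 R_polish F.
Proof.
  intros HF x1 x2 N.
  destruct (classic (exists a b, F a b)) as [[a [b Fab]]|NE].
  - destruct (Req_dec x1 a) as [E1|E1].
    + destruct (Req_dec x2 b) as [E2|E2]; [subst; contradiction|].
      exists (Rabs (x2 - b)). split; [apply Rabs_pos_lt; lra|].
      intros y1 y2 _ D2 C. destruct (HF _ _ _ _ C Fab) as [_ ->]. simpl in D2. lra.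
    + exists (Rabs (x1 - a)). split; [apply Rabs_pos_lt; lra|].
      intros y1 y2 D1 _ C. destruct (HF _ _ _ _ C Fab) as [-> _]. simpl in D1. lra.
  - exists 1. split; [lra|]. intros y1 y2 _ _ C. apply NE; eauto.
Qed.

Lemma closed2_gap (d : R) : @is_closed2 R_polish (fun a b => 0 <= a /\ a + d <= b).
Proof.
  intros x1 x2 N. simpl.
  destruct (Rlt_or_le x1 0) as [L|L].
  - exists (- x1). split; [lra|]. intros y1 y2 D1 _ [C _].
    apply Rabs_def2 in D1. lra.
  - assert (x2 < x1 + d) by (apply Rnot_le_lt; intro; apply N; split; lra).
    exists ((x1 + d - x2) / 2). split; [lra|]. intros y1 y2 D1 D2 [_ C].
    apply Rabs_def2 in D1. apply Rabs_def2 in D2. lra.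
Qed.

Definition closed_piece (P : nat -> Prop) (n : nat) (a b : R) : Prop :=
  (0 <= a /\ a + / INR (S n) <= b) \/
  (exists k j, P k /\ (2 <= k)%nat /\ (j < k)%nat /\ (k * k + j)%nat = n /\
     a = cycle_point k j /\ b = cycle_point k (S j mod k)).

Lemma cycle_graph_Sigma02 (P : nat -> Prop) : @Sigma02_2 R_polish (cycle_edges P).
Proof.
  exists (closed_piece P). split.
  - intro n. apply closed2_or; [apply closed2_gap|]. apply closed2_subsingleton.
    intros a b a' b' [k [j [_ [_ [Hj [Hc [-> ->]]]]]]] [k' [j' [_ [_ [Hj' [Hc' [-> ->]]]]]]].
    assert (k = k' /\ j = j') as [-> ->]
      by (apply cycle_point_inj; auto; unfold cycle_point; rewrite Hc, Hc'; reflexivity).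
    auto.
  - intros a b. split.
    + intros [[H1 H2]|[k [j [Pk [Hk [Hj [-> ->]]]]]]].
      * destruct (archimed_cor1 (b - a) ltac:(lra)) as [N [HN HN0]].
        destruct N as [|n]; [lia|]. exists n. left. split; lra.
      * exists (k * k + j)%nat. right. exists k, j. repeat split; auto.
    + intros [n [[H1 H2]|[k [j [Pk [Hk [Hj [_ [-> ->]]]]]]]]].
      * left. split; auto.
        assert (0 < / INR (S n)) by (apply Rinv_0_lt_compat, lt_0_INR; lia). lra.
      * right. exists k, j. repeat split; auto.
Qed.

(* Uncountable chromatic number.  Cantor space embeds into [0, +oo) by
   b |-> sum_n b(n) 3^-n, and there is no injection of Cantor space into nat. *)

Lemma no_cantor_injection (F : (nat -> bool) -> nat) : ~ injective F.
Proof.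
  intro HF.
  set (inv := fun n => epsilon (inhabits (fun _ : nat => false)) (fun f => F f = n)).
  assert (Hinv : forall f, inv (F f) = f).
  { intro f. apply HF. unfold inv.
    apply (epsilon_spec (inhabits (fun _ : nat => false)) (fun g => F g = F f)).
    exists f; reflexivity. }
  set (diag := fun k => negb (inv k k)).
  assert (E : diag (F diag) = negb (diag (F diag))) by (unfold diag at 1; rewrite Hinv; reflexivity).
  destruct (diag (F diag)); discriminate.
Qed.

Fixpoint ternary_partial (b : nat -> bool) (n : nat) : R :=
  match n with
  | O => 0
  | S n => ternary_partial b n + (if b n then 1 else 0) * (/3) ^ n
  end.

Lemma third_pow_pos n : 0 < (/3) ^ n.
Proof. apply pow_lt; lra. Qed.

Lemma ternary_partial_mono b n m : (n <= m)%nat -> ternary_partial b n <= ternary_partial b m.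
Proof.
  induction 1; [lra|]. simpl. pose proof (third_pow_pos m). destruct (b m); lra.
Qed.

(* The tail after n terms is at most sum_{i >= n} 3^-i = 3/2 * 3^-n. *)
Lemma ternary_partial_tail b m n : (m <= n)%nat ->
  ternary_partial b n + 3/2 * (/3)^n <= ternary_partial b m + 3/2 * (/3)^m.
Proof.
  induction 1; [lra|]. simpl. pose proof (third_pow_pos m0). destruct (b m0); lra.
Qed.

Definition ternary_partials (b : nat -> bool) (x : R) : Prop := exists n, x = ternary_partial b n.

Lemma ternary_partials_bound b : bound (ternary_partials b).
Proof.
  exists (3/2). intros x [n ->]. pose proof (ternary_partial_tail b 0 n ltac:(lia)).
  pose proof (third_pow_pos n). simpl in *. lra.
Qed.

Definition ternary (b : nat -> bool) : R :=
  proj1_sig (completeness (ternary_partials b) (ternary_partials_bound b)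
    (ex_intro _ 0 (ex_intro _ 0%nat eq_refl))).

Lemma ternary_ge b n : ternary_partial b n <= ternary b.
Proof.
  unfold ternary. destruct completeness as [l [H1 H2]]. apply H1. exists n; reflexivity.
Qed.

Lemma ternary_le b m : ternary b <= ternary_partial b m + 3/2 * (/3)^m.
Proof.
  unfold ternary. destruct completeness as [l [H1 H2]]. apply H2.
  intros x [n ->]. destruct (Nat.le_gt_cases n m).
  - pose proof (ternary_partial_mono b n m H). pose proof (third_pow_pos m). lra.
  - pose proof (ternary_partial_tail b m n ltac:(lia)). pose proof (third_pow_pos n). lra.
Qed.

Lemma ternary_nonneg b : 0 <= ternary b.
Proof. apply (ternary_ge b 0). Qed.

Lemma ternary_first_difference b b' k : (forall i, (i < k)%nat -> b i = b' i) ->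
  b k = true -> b' k = false -> ternary b' < ternary b.
Proof.
  intros Hi Hb Hb'.
  assert (Eq : forall n, (n <= k)%nat -> ternary_partial b n = ternary_partial b' n).
  { induction n; intros Hn; simpl; auto. rewrite IHn, Hi by lia. reflexivity. }
  pose proof (ternary_ge b (S k)) as G. pose proof (ternary_le b' (S k)) as L.
  simpl in G, L. rewrite Hb in G. rewrite Hb' in L. rewrite Eq in G by lia.
  pose proof (third_pow_pos k). lra.
Qed.

Lemma ternary_inj : injective ternary.
Proof.
  intros b b' E. apply functional_extensionality. intro x. apply NNPP. intro Nx.
  destruct (Wf_nat.dec_inh_nat_subset_has_unique_least_element (fun k => b k <> b' k))
    as [k [[Hk Hleast] _]]; [intro; apply classic|eauto|].
  assert (Hi : forall i, (i < k)%nat -> b i = b' i).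
  { intros i Hi. apply NNPP. intro D. specialize (Hleast i D). lia. }
  destruct (b k) eqn:Bk, (b' k) eqn:Bk'; try congruence.
  - pose proof (ternary_first_difference b b' k Hi Bk Bk'). lra.
  - pose proof (ternary_first_difference b' b k ltac:(intros; symmetry; auto) Bk' Bk). lra.
Qed.

Lemma cycle_graph_uncountable_chromatic (P : nat -> Prop) :
  uncountable_borel_chromatic (cycle_graph P).
Proof.
  intros Y c [g Hg] _. simpl in c |- *. apply NNPP. intro Nmono.
  apply (no_cantor_injection (fun b => g (c (ternary b)))).
  intros b b' E. apply Hg in E. apply ternary_inj.
  destruct (Rtotal_order (ternary b) (ternary b')) as [L|[L|L]]; auto; exfalso; apply Nmono.
  - exists (ternary b), (ternary b'). split; auto. left. split; auto. apply ternary_nonneg.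
  - exists (ternary b'), (ternary b). split; auto. left. split; auto. apply ternary_nonneg.
Qed.

Lemma cycle_graph_good (P : nat -> Prop) : good (cycle_graph P).
Proof.
  split; [apply cycle_graph_digraph|].
  split; [apply cycle_graph_Sigma02|apply cycle_graph_uncountable_chromatic].
Qed.

Lemma mod_S_mod j k : (S (j mod k) mod k = S j mod k)%nat.
Proof.
  replace (S (j mod k)) with (j mod k + 1)%nat by lia.
  replace (S j) with (j + 1)%nat by lia.
  apply Nat.Div0.add_mod_idemp_l.
Qed.

(* From a nonnegative point only order edges
   leave, so w never visits [0, +oo): it would strictly increase forever. *)
Lemma closed_walk_negative (T : nat -> Prop) (w : nat -> R) (k : nat) : (0 < k)%nat ->
  (forall j, cycle_edges T (w j) (w (S j))) -> (forall j, w (j + k)%nat = w j) ->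
  forall j, w j < 0.
Proof.
  intros Hk Hedge Hper j. apply Rnot_le_lt. intro Hj.
  assert (Incr : forall i, (0 < i)%nat -> w j < w (j + i)%nat).
  { induction i as [|i IH]; [lia|]. intros _.
    assert (Hwi : w j <= w (j + i)%nat)
      by (destruct i; [rewrite Nat.add_0_r; lra|left; apply IH; lia]).
    rewrite Nat.add_succ_r.
    destruct (Hedge (j + i)%nat) as [[_ L]|[k' [j' [_ [_ [_ [E _]]]]]]]; [lra|].
    pose proof (cycle_point_neg k' j'). lra. }
  specialize (Incr k Hk). rewrite Hper in Incr. lra.
Qed.

Lemma cycle_walk_rotation (T : nat -> Prop) (w : nat -> R) :
  (forall j, cycle_edge T (w j) (w (S j))) ->
  exists m a, T m /\ (2 <= m)%nat /\ (a < m)%nat /\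
    forall j, w j = cycle_point m ((a + j) mod m).
Proof.
  intro Hcyc.
  destruct (Hcyc 0%nat) as [m [a [Tm [Hm [Ha [E0 _]]]]]].
  exists m, a. repeat split; auto.
  induction j as [|j IH].
  - rewrite Nat.add_0_r, Nat.mod_small by lia. exact E0.
  - destruct (Hcyc j) as [m' [a' [_ [Hm' [Ha' [E1 E2]]]]]].
    rewrite IH in E1.
    apply cycle_point_inj in E1; [|apply Nat.mod_upper_bound; lia|lia].
    destruct E1 as [<- <-]. rewrite E2, mod_S_mod, Nat.add_succ_r. reflexivity.
Qed.

Lemma rotation_period m a k : (a < m)%nat -> (1 <= k <= m)%nat ->
  ((a + k) mod m = a)%nat -> k = m.
Proof.
  intros Ha Hk E. pose proof (Nat.div_mod (a + k) m ltac:(lia)) as D.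
  rewrite E in D. destruct ((a + k) / m)%nat; nia.
Qed.

Lemma cycle_length_reflected (P T : nat -> Prop) (h : R -> R) :
  injective h -> (forall x y, cycle_edges P x y -> cycle_edges T (h x) (h y)) ->
  forall k, P k -> (2 <= k)%nat -> T k.
Proof.
  intros Hinj Hhom k Pk Hk.
  set (w := fun j => h (cycle_point k (j mod k))).
  assert (Hedge : forall j, cycle_edges T (w j) (w (S j))).
  { intro j. apply Hhom. right. exists k, (j mod k).
    repeat split; auto; [apply Nat.mod_upper_bound; lia|]. rewrite mod_S_mod. reflexivity. }
  assert (Hper : forall j, w (j + k)%nat = w j).
  { intro j. unfold w. rewrite Nat.Div0.add_mod, Nat.Div0.mod_same, Nat.add_0_r, Nat.Div0.mod_mod.
    reflexivity. }
  assert (Hcyc : forall j, cycle_edge T (w j) (w (S j))).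
  { intro j. destruct (Hedge j) as [[H0 _]|C]; [|exact C].
    pose proof (closed_walk_negative T w k ltac:(lia) Hedge Hper j). lra. }
  destruct (cycle_walk_rotation T w Hcyc) as [m [a [Tm [Hm [Ha Hrot]]]]].
  assert (Hback : forall j, w j = w 0%nat -> (j < k)%nat -> j = 0%nat).
  { intros j E Hj. unfold w in E. apply Hinj in E.
    rewrite Nat.Div0.mod_0_l, Nat.mod_small in E by lia.
    apply cycle_point_inj in E; lia. }
  assert (Hkm : (k <= m)%nat).
  { destruct (Nat.le_gt_cases k m) as [L|L]; [exact L|exfalso].
    assert (Hwm : w m = w 0%nat) by (rewrite !Hrot, Nat.add_0_r, Nat.Div0.add_mod,
      Nat.Div0.mod_same, Nat.add_0_r, Nat.Div0.mod_mod; reflexivity).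
    specialize (Hback m Hwm L). lia. }
  assert (Hfix : ((a + k) mod m = a)%nat).
  { pose proof (Hper 0%nat) as E. rewrite !Hrot, Nat.add_0_r, (Nat.mod_small a) in E by lia.
    apply cycle_point_inj in E; [tauto|apply Nat.mod_upper_bound; lia|lia]. }
  replace k with m by (symmetry; apply (rotation_period m a k); auto; lia).
  exact Tm.
Qed.

Lemma cycle_graph_no_reduction m (P T : nat -> Prop) k :
  P k -> (2 <= k)%nat -> ~ T k -> ~ inj_reduces m (cycle_graph P) (cycle_graph T).
Proof.
  intros Pk Hk NTk [h [Hinj [_ Hhom]]].
  exact (NTk (cycle_length_reflected P T h Hinj Hhom k Pk Hk)).
Qed.

Lemma cycle_graph_reduction m (P T : nat -> Prop) :
  (forall k, P k -> T k) -> inj_reduces m (cycle_graph P) (cycle_graph T).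
Proof.
  intro HPT. exists (fun x => x). split; [intros x y E; exact E|]. split.
  - destruct m; intros U HU; [exact HU|apply borel_open; exact HU].
  - intros x x' [H|[k [j [Pk Hrest]]]]; [left; exact H|right; exists k, j; auto].
Qed.

Definition antichain_lengths (i : nat -> bool) (n : nat) : Prop :=
  exists k, n = (2 * k + 3 + (if i k then 1 else 0))%nat.

Lemma antichain_lengths_separate (i j : nat -> bool) k : i k <> j k ->
  ~ antichain_lengths j (2 * k + 3 + (if i k then 1 else 0)).
Proof.
  intros D [k' E].
  destruct (i k) eqn:A1, (j k) eqn:A2, (j k') eqn:A3; try congruence; try lia;
    assert (k' = k) by lia; subst; congruence.
Qed.

Lemma antichain_incomparable m (i j : nat -> bool) : i <> j ->
  ~ inj_reduces m (cycle_graph (antichain_lengths i)) (cycle_graph (antichain_lengths j)).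
Proof.
  intro Nij.
  assert (Hk : exists k, i k <> j k).
  { apply NNPP. intro N. apply Nij. apply functional_extensionality. intro k.
    apply NNPP. intro E. apply N. eauto. }
  destruct Hk as [k Hk].
  apply (cycle_graph_no_reduction m _ _ (2 * k + 3 + (if i k then 1 else 0)));
    [exists k; reflexivity|lia|apply antichain_lengths_separate; auto].
Qed.

Definition chain_lengths (n k : nat) : Prop := (2 <= k <= n + 2)%nat.

Theorem theorem1p4 : forall m : redmode,
  (exists F : (nat -> bool) -> PRel,
      (forall i, good (F i)) /\
      (forall i j, i <> j -> ~ inj_reduces m (F i) (F j) /\ ~ inj_reduces m (F j) (F i)))
  /\
  (exists G : nat -> PRel,
      (forall n, good (G n)) /\
      (forall n, inj_reduces m (G n) (G (S n)) /\ ~ inj_reduces m (G (S n)) (G n))).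
Proof.
  intro m. split.
  - exists (fun i => cycle_graph (antichain_lengths i)).
    split; [intro; apply cycle_graph_good|].
    intros i j Nij. split; apply antichain_incomparable; auto.
  - exists (fun n => cycle_graph (chain_lengths n)).
    split; [intro; apply cycle_graph_good|].
    intro n. split.
    + apply cycle_graph_reduction. unfold chain_lengths. intros; lia.
    + apply (cycle_graph_no_reduction m _ _ (n + 3)); unfold chain_lengths; lia.
Qed.
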